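(* Let $D>0$ and $\ell_0=\sqrt{8Dt}$. The function $$E^{(0)}(x,y,z,t)=\operatorname{erfc}\Bigl(\frac{x}{\ell_0}\Bigr)\operatorname{erfc}\Bigl(\frac{y}{\ell_0}\Bigr)+\operatorname{erfc}\Bigl(\frac{z}{\ell_0}\Bigr)\operatorname{erfc}\Bigl(\frac{x+y+z}{\ell_0}\Bigr)-\operatorname{erfc}\Bigl(\frac{x+z}{\ell_0}\Bigr)\operatorname{erfc}\Bigl(\frac{y+z}{\ell_0}\Bigr)$$ satisfies, for $t>0$, $$\partial_tE=2D\bigl[\partial_x^2+\partial_y^2+\partial_z^2-\partial_x\partial_z-\partial_y\partial_z\bigr]E,$$ together with the consistency conditions $E^{(0)}(x,y,z,t)=E^{(0)}(y,x,z,t)$, $E^{(0)}(x,0,z,t)=\operatorname{erfc}(x/\ell_0)$, $E^{(0)}(0,y,z,t)=\operatorname{erfc}(y/\ell_0)$, $E^{(0)}(x,y,0,t)=\operatorname{erfc}((x+y)/\ell_0)$, and $E^{(0)}(x,y,z,t)\to0$ as $t\to0^+$ for $x,y,z>0$. It is the two-interval probability for an initially fully occupied lattice, and $E^{(0)}(x,y,z,t)\to\operatorname{erfc}(x/\ell_0)\operatorname{erfc}(y/\ell_0)$ as $z\to\infty$.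
   Context: In the continuum limit of the one-dimensional coagulation-diffusion process with diffusion constant $D$, $E(x,y,z,t)$ denotes the probability of two empty intervals of lengths at least $x$ and $y$ separated by distance $z$ at time $t$; for the initially full lattice the single-interval probability is $E(x,t)=\operatorname{erfc}(x/\ell_0)$. *)

From Stdlib Require Import Reals Lra.
Open Scope R_scope.

Definition gauss (s : R) : R := exp (- s ^ 2).

Lemma gauss_cont : forall x, continuity_pt gauss x.
Proof.
  intro x. apply derivable_continuous_pt. unfold gauss. reg.
Qed.

Definition gauss_int (u : R) : R :=
  match Rle_dec 0 u with
  | left h => RiemannInt (@continuity_implies_RiemannInt gauss _ _ h (fun x _ => gauss_cont x))
  | right h =>
      - RiemannInt (@continuity_implies_RiemannInt gauss _ _
                      (Rlt_le _ _ (Rnot_le_lt _ _ h)) (fun x _ => gauss_cont x))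
  end.

Definition erf (u : R) : R := 2 / sqrt PI * gauss_int u.
Definition erfc (u : R) : R := 1 - erf u.

Definition ell0 (D t : R) : R := sqrt (8 * D * t).

Definition E0 (D x y z t : R) : R :=
  let l := ell0 D t in
  erfc (x / l) * erfc (y / l)
  + erfc (z / l) * erfc ((x + y + z) / l)
  - erfc ((x + z) / l) * erfc ((y + z) / l).

(* Each of the three products in E0 has the form erfc (a.v / l0) * erfc (b.v / l0) for
   linear forms a, b of v = (x, y, z).  Since erfc (u / sqrt (8 D t)) solves the
   one-dimensional heat equation d/dt = 2 D d^2/du^2, such a product solves the PDE as soon
   as a and b are orthonormal for the polar form of the symbol
   x1^2 + x2^2 + x3^2 - x1 x3 - x2 x3 of the operator; the pairs (x, y), (z, x + y + z) and
   (x + z, y + z) are.  The boundary values follow from erfc 0 = 1, and both limits from the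
   tail bound 0 <= erfc u <= 4/PI exp (-u^2) for u >= 0.  That bound rests on the value
   sqrt PI / 2 of the Gaussian integral, obtained classically: with
   G t = int_0^t exp (-s^2) and H t = int_0^1 exp (-t^2 (1 + s^2)) / (1 + s^2) ds, the sum
   G^2 + H has zero derivative and equals PI / 4 at t = 0, while 0 <= H t <= exp (-t^2). *)

From Stdlib Require Import Reals Lra.
From Coquelicot Require Import Coquelicot.
Open Scope R_scope.

(** * The Gaussian integral *)

(* Coquelicot lemmas with the normed-module instance fixed to [R], which [apply] does not
   infer on its own. *)
Lemma ex_derive_continuous_R (f : R -> R) x : ex_derive f x -> continuous f x.
Proof. exact (ex_derive_continuous f x). Qed.

Lemma ex_RInt_continuous_R (f : R -> R) a b :
  (forall s, Rmin a b <= s <= Rmax a b -> continuous f s) -> ex_RInt f a b.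
Proof. exact (ex_RInt_continuous f a b). Qed.

Lemma RInt_derive_R (f df : R -> R) a b :
  (forall s, Rmin a b <= s <= Rmax a b -> is_derive f s (df s)) ->
  (forall s, Rmin a b <= s <= Rmax a b -> continuous df s) ->
  RInt df a b = f b - f a :> R.
Proof. intros; apply is_RInt_unique; exact (is_RInt_derive f df a b H H0). Qed.

Lemma gauss_continuous x : continuous gauss x.
Proof. apply ex_derive_continuous_R; unfold gauss; auto_derive; auto. Qed.

Lemma ex_RInt_gauss a b : ex_RInt gauss a b.
Proof. apply ex_RInt_continuous_R; intros; apply gauss_continuous. Qed.

Lemma gauss_int_RInt u : gauss_int u = RInt gauss 0 u.
Proof.
  unfold gauss_int; destruct (Rle_dec 0 u).
  - symmetry; apply RInt_Reals.
  - rewrite <- RInt_Reals; apply (opp_RInt_swap gauss), ex_RInt_gauss.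
Qed.

Lemma is_derive_gauss_int x : is_derive gauss_int x (gauss x).
Proof.
  apply (is_derive_ext (RInt gauss 0)); [intros; symmetry; apply gauss_int_RInt|].
  apply is_derive_RInt with 0; [|apply gauss_continuous].
  apply filter_forall; intros; apply RInt_correct, ex_RInt_gauss.
Qed.

Lemma gauss_int_0 : gauss_int 0 = 0.
Proof. rewrite gauss_int_RInt; exact (RInt_point 0 gauss). Qed.

Lemma gauss_int_nonneg u : 0 <= u -> 0 <= gauss_int u.
Proof.
  intros Hu; rewrite gauss_int_RInt.
  apply RInt_ge_0; auto using ex_RInt_gauss; intros; left; apply exp_pos.
Qed.

Definition gauss_aux (t s : R) : R := exp (- (t ^ 2 * (1 + s ^ 2))) / (1 + s ^ 2).
Definition gauss_aux_dt (t s : R) : R := -2 * t * exp (- (t ^ 2 * (1 + s ^ 2))).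
Definition gauss_aux_int (t : R) : R := RInt (gauss_aux t) 0 1.

Lemma one_plus_sq_pos s : 0 < 1 + s ^ 2.
Proof. pose proof (pow2_ge_0 s); lra. Qed.

Lemma is_derive_gauss_aux t s : is_derive (fun u => gauss_aux u s) t (gauss_aux_dt t s).
Proof.
  unfold gauss_aux, gauss_aux_dt; pose proof (one_plus_sq_pos s).
  auto_derive; [easy|].
  replace (t * (t * 1) * (1 + s * (s * 1))) with (t ^ 2 * (1 + s ^ 2)) by ring.
  field; lra.
Qed.

Lemma gauss_aux_dt_continuous t s : continuity_2d_pt gauss_aux_dt t s.
Proof.
  unfold gauss_aux_dt.
  apply continuity_2d_pt_mult.
  - apply (continuity_2d_pt_mult (fun _ _ => -2) (fun u _ => u));
      [apply continuity_2d_pt_const | apply continuity_2d_pt_id1].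
  - apply continuity_1d_2d_pt_comp; [apply derivable_continuous_pt, derivable_pt_exp|].
    apply continuity_2d_pt_opp.
    apply (continuity_2d_pt_ext (fun u v => (u * u) * (1 + v * v))); [intros; ring|].
    repeat first [ apply continuity_2d_pt_mult | apply continuity_2d_pt_plus
                 | apply continuity_2d_pt_const | apply continuity_2d_pt_id1
                 | apply continuity_2d_pt_id2 ].
Qed.

Lemma ex_RInt_gauss_aux t a b : ex_RInt (gauss_aux t) a b.
Proof.
  apply ex_RInt_continuous_R; intros s _; apply ex_derive_continuous_R.
  unfold gauss_aux; pose proof (one_plus_sq_pos s); auto_derive; lra.
Qed.

Lemma RInt_gauss_aux_dt t : RInt (gauss_aux_dt t) 0 1 = -2 * gauss t * gauss_int t :> R.
Proof.
  rewrite (RInt_derive_R (fun s => -2 * gauss t * gauss_int (t * s))).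
  - rewrite Rmult_1_r, Rmult_0_r, gauss_int_0. ring.
  - intros s _.
    replace (gauss_aux_dt t s) with (-2 * gauss t * (t * gauss (t * s))).
    2:{ unfold gauss_aux_dt, gauss.
        replace (- (t ^ 2 * (1 + s ^ 2))) with (- t ^ 2 + - (t * s) ^ 2) by ring.
        rewrite exp_plus; ring. }
    apply is_derive_scal.
    apply (is_derive_comp gauss_int (fun s => t * s)); [apply is_derive_gauss_int|].
    auto_derive; auto; ring.
  - intros s _; apply ex_derive_continuous_R; unfold gauss_aux_dt; auto_derive; auto.
Qed.

Lemma is_derive_gauss_aux_int t : is_derive gauss_aux_int t (-2 * gauss t * gauss_int t).
Proof.
  rewrite <- RInt_gauss_aux_dt.
  rewrite (RInt_ext (gauss_aux_dt t) (fun s => Derive (fun u => gauss_aux u s) t)).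
  2:{ intros; symmetry; apply is_derive_unique, is_derive_gauss_aux. }
  apply is_derive_RInt_param.
  - apply filter_forall; intros u s _; eexists; apply is_derive_gauss_aux.
  - intros s _. apply (continuity_2d_pt_ext gauss_aux_dt); [|apply gauss_aux_dt_continuous].
    intros; symmetry; apply is_derive_unique, is_derive_gauss_aux.
  - apply filter_forall; intros; apply ex_RInt_gauss_aux.
Qed.

Lemma gauss_aux_int_0 : gauss_aux_int 0 = PI / 4.
Proof.
  unfold gauss_aux_int; rewrite (RInt_derive_R atan), atan_1, atan_0; [ring| |].
  - intros s _.
    replace (gauss_aux 0 s) with (/ (1 + s²)); [apply is_derive_atan|].
    unfold gauss_aux, Rsqr; replace (- (0 ^ 2 * (1 + s ^ 2))) with 0 by ring.
    rewrite exp_0; pose proof (one_plus_sq_pos s); field; lra.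
  - intros s _; apply ex_derive_continuous_R.
    unfold gauss_aux; pose proof (one_plus_sq_pos s); auto_derive; lra.
Qed.

Lemma exp_le_compat x y : x <= y -> exp x <= exp y.
Proof. intros [Hlt|Heq]; [left; apply exp_increasing, Hlt | rewrite Heq; apply Rle_refl]. Qed.

Lemma gauss_aux_int_bounds t : 0 <= gauss_aux_int t <= exp (- t ^ 2).
Proof.
  assert (Hbound : forall s, 0 <= gauss_aux t s <= exp (- t ^ 2)).
  { intros s; unfold gauss_aux; pose proof (one_plus_sq_pos s).
    pose proof (exp_pos (- (t ^ 2 * (1 + s ^ 2)))).
    assert (exp (- (t ^ 2 * (1 + s ^ 2))) <= exp (- t ^ 2)).
    { apply exp_le_compat; pose proof (pow2_ge_0 t); pose proof (pow2_ge_0 s); nra. }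
    split; [apply Rlt_le, Rdiv_lt_0_compat; auto|].
    apply Rmult_le_reg_r with (1 + s ^ 2); auto.
    unfold Rdiv; rewrite Rmult_assoc, Rinv_l by lra; pose proof (pow2_ge_0 s); nra. }
  unfold gauss_aux_int; split.
  - apply RInt_ge_0; [lra | apply ex_RInt_gauss_aux | intros; apply Hbound].
  - replace (exp (- t ^ 2)) with (RInt (fun _ => exp (- t ^ 2)) 0 1 : R)
      by (rewrite RInt_const; unfold scal; simpl; unfold mult; simpl; ring).
    apply RInt_le; [lra | apply ex_RInt_gauss_aux | apply ex_RInt_const | intros; apply Hbound].
Qed.

Lemma gauss_int_sq_add_aux_int t : gauss_int t ^ 2 + gauss_aux_int t = PI / 4.
Proof.
  set (F s := gauss_int s ^ 2 + gauss_aux_int s).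
  assert (HF' : forall u, is_derive F u 0).
  { intros u; apply is_derive_Reals.
    apply (derivable_pt_lim_ext (fun s => gauss_int s * gauss_int s + gauss_aux_int s));
      [intros; unfold F; ring|].
    replace 0 with (gauss u * gauss_int u + gauss_int u * gauss u
                    + -2 * gauss u * gauss_int u) by ring.
    apply derivable_pt_lim_plus; [apply derivable_pt_lim_mult|];
      apply is_derive_Reals; auto using is_derive_gauss_int, is_derive_gauss_aux_int. }
  assert (HF0 : F 0 = PI / 4) by (unfold F; rewrite gauss_int_0, gauss_aux_int_0; ring).
  fold (F t); rewrite <- HF0.
  destruct (Rtotal_order 0 t) as [Hlt|[Heq|Hlt]].
  - symmetry; apply (eq_is_derive F); auto.
  - rewrite Heq; reflexivity.
  - apply (eq_is_derive F); auto.
Qed.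

(** * The complementary error function *)

Definition derfc (u : R) : R := - (2 / sqrt PI) * gauss u.

Lemma derivable_pt_lim_erfc u : derivable_pt_lim erfc u (derfc u).
Proof.
  unfold erfc, erf, derfc.
  replace (- (2 / sqrt PI) * gauss u) with (0 - 2 / sqrt PI * gauss u) by ring.
  apply derivable_pt_lim_minus; [apply derivable_pt_lim_const|].
  apply derivable_pt_lim_scal, is_derive_Reals, is_derive_gauss_int.
Qed.

Lemma derivable_pt_lim_derfc u : derivable_pt_lim derfc u (-2 * u * derfc u).
Proof.
  unfold derfc; replace (-2 * u * (- (2 / sqrt PI) * gauss u))
    with (- (2 / sqrt PI) * (-2 * u * gauss u)) by ring.
  apply derivable_pt_lim_scal, is_derive_Reals; unfold gauss; auto_derive; [easy|].
  replace (u * (u * 1)) with (u ^ 2) by ring; ring.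
Qed.

Lemma erfc_0 : erfc 0 = 1.
Proof. unfold erfc, erf; rewrite gauss_int_0; ring. Qed.

Lemma erfc_le_1 u : 0 <= u -> erfc u <= 1.
Proof.
  intros Hu; unfold erfc, erf; pose proof (gauss_int_nonneg u Hu).
  assert (0 < 2 / sqrt PI) by (apply Rdiv_lt_0_compat; [lra | apply sqrt_lt_R0, PI_RGT_0]).
  nra.
Qed.

Lemma erfc_bounds u : 0 <= u -> 0 <= erfc u <= 4 / PI * exp (- u ^ 2).
Proof.
  intros Hu.
  pose proof (gauss_int_sq_add_aux_int u) as Hsum.
  pose proof (gauss_aux_int_bounds u) as [H0 H1].
  pose proof (gauss_int_nonneg u Hu) as HG.
  assert (Hs : 0 < sqrt PI) by apply sqrt_lt_R0, PI_RGT_0.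
  assert (Hss : sqrt PI * sqrt PI = PI) by (apply sqrt_sqrt; pose proof PI_RGT_0; lra).
  set (s := sqrt PI) in *; set (G := gauss_int u) in *; set (H := gauss_aux_int u) in *.
  assert (Hdiff : (s - 2 * G) * (s + 2 * G) = 4 * H) by (rewrite <- Hss in Hsum; lra).
  assert (HsG : 0 <= s - 2 * G) by nra.
  unfold erfc, erf; fold G s.
  replace (1 - 2 / s * G) with ((s - 2 * G) / s) by (field; lra).
  split; [apply Rmult_le_pos; [lra | apply Rlt_le, Rinv_0_lt_compat; lra]|].
  replace ((s - 2 * G) / s) with ((s - 2 * G) * s / (s * s)) by (field; lra).
  replace (4 / PI * exp (- u ^ 2)) with (4 * exp (- u ^ 2) / (s * s)) by (rewrite <- Hss; field; lra).
  apply Rmult_le_compat_r; [apply Rlt_le, Rinv_0_lt_compat; nra|].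
  nra.
Qed.

Lemma erfc_tail eps : 0 < eps -> exists M, 0 <= M /\ forall u, M < u -> erfc u < eps.
Proof.
  intros Heps; pose proof PI_RGT_0 as Hpi.
  exists (4 / (PI * eps)); split; [apply Rlt_le, Rdiv_lt_0_compat; nra|].
  intros u Hu.
  assert (Hu0 : 0 < u) by (apply Rle_lt_trans with (2 := Hu), Rlt_le, Rdiv_lt_0_compat; nra).
  assert (Hexp : exp (- u ^ 2) * u < 1).
  { pose proof (exp_ineq1_le (u ^ 2)).
    assert (exp (- u ^ 2) * exp (u ^ 2) = 1) by (rewrite <- exp_plus, <- exp_0; f_equal; ring).
    pose proof (exp_pos (- u ^ 2)); nra. }
  assert (HuM : 4 < PI * eps * u).
  { apply Rmult_lt_compat_l with (r := PI * eps) in Hu; [|nra].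
    replace (PI * eps * (4 / (PI * eps))) with 4 in Hu by (field; lra); lra. }
  apply Rle_lt_trans with (1 := proj2 (erfc_bounds u (Rlt_le _ _ Hu0))).
  apply Rmult_lt_reg_r with (PI * u); [nra|].
  replace (4 / PI * exp (- u ^ 2) * (PI * u)) with (4 * (exp (- u ^ 2) * u)) by (field; lra).
  nra.
Qed.

(** * Products of heat profiles *)

Definition pde_solution (D : R) (F : R -> R -> R -> R -> R) : Prop :=
  exists Ex Ey Ez Et Exx Eyy Ezz Exz Eyz : R -> R -> R -> R -> R,
    forall x y z t, 0 < t ->
      derivable_pt_lim (fun u => F u y z t) x (Ex x y z t) /\
      derivable_pt_lim (fun u => F x u z t) y (Ey x y z t) /\
      derivable_pt_lim (fun u => F x y u t) z (Ez x y z t) /\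
      derivable_pt_lim (fun u => F x y z u) t (Et x y z t) /\
      derivable_pt_lim (fun u => Ex u y z t) x (Exx x y z t) /\
      derivable_pt_lim (fun u => Ey x u z t) y (Eyy x y z t) /\
      derivable_pt_lim (fun u => Ez x y u t) z (Ezz x y z t) /\
      derivable_pt_lim (fun u => Ex x y u t) z (Exz x y z t) /\
      derivable_pt_lim (fun u => Ey x y u t) z (Eyz x y z t) /\
      Et x y z t = 2 * D * (Exx x y z t + Eyy x y z t + Ezz x y z t
                            - Exz x y z t - Eyz x y z t).

Lemma pde_solution_ext D (F G : R -> R -> R -> R -> R) :
  (forall x y z t, F x y z t = G x y z t) -> pde_solution D G -> pde_solution D F.
Proof.
  intros HFG [Ex [Ey [Ez [Et [Exx [Eyy [Ezz [Exz [Eyz HG]]]]]]]]].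
  exists Ex, Ey, Ez, Et, Exx, Eyy, Ezz, Exz, Eyz; intros x y z t Ht.
  destruct (HG x y z t Ht) as (Hx & Hy & Hz & Htt & Hrest).
  repeat split; try apply Hrest;
    eapply derivable_pt_lim_ext; try eassumption; intros; symmetry; apply HFG.
Qed.

Lemma derivable_pt_lim_lincomb (f g : R -> R) a b x lf lg :
  derivable_pt_lim f x lf -> derivable_pt_lim g x lg ->
  derivable_pt_lim (fun s => a * f s + b * g s) x (a * lf + b * lg).
Proof.
  intros Hf Hg; apply derivable_pt_lim_plus; apply derivable_pt_lim_scal; assumption.
Qed.

Lemma pde_solution_lincomb D F G a b :
  pde_solution D F -> pde_solution D G ->
  pde_solution D (fun x y z t => a * F x y z t + b * G x y z t).
Proof.
  intros [Fx [Fy [Fz [Ft [Fxx [Fyy [Fzz [Fxz [Fyz HF]]]]]]]]]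
         [Gx [Gy [Gz [Gt [Gxx [Gyy [Gzz [Gxz [Gyz HG]]]]]]]]].
  exists (fun x y z t => a * Fx x y z t + b * Gx x y z t),
    (fun x y z t => a * Fy x y z t + b * Gy x y z t),
    (fun x y z t => a * Fz x y z t + b * Gz x y z t),
    (fun x y z t => a * Ft x y z t + b * Gt x y z t),
    (fun x y z t => a * Fxx x y z t + b * Gxx x y z t),
    (fun x y z t => a * Fyy x y z t + b * Gyy x y z t),
    (fun x y z t => a * Fzz x y z t + b * Gzz x y z t),
    (fun x y z t => a * Fxz x y z t + b * Gxz x y z t),
    (fun x y z t => a * Fyz x y z t + b * Gyz x y z t).
  intros x y z t Ht.
  destruct (HF x y z t Ht) as (F1 & F2 & F3 & F4 & F5 & F6 & F7 & F8 & F9 & Fpde).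
  destruct (HG x y z t Ht) as (G1 & G2 & G3 & G4 & G5 & G6 & G7 & G8 & G9 & Gpde).
  repeat split; try (apply derivable_pt_lim_lincomb; assumption).
  rewrite Fpde, Gpde; ring.
Qed.

Definition lin3 (a1 a2 a3 x y z : R) : R := a1 * x + a2 * y + a3 * z.

Lemma derivable_pt_lim_lin3_x a1 a2 a3 x y z :
  derivable_pt_lim (fun u => lin3 a1 a2 a3 u y z) x a1.
Proof. apply is_derive_Reals; unfold lin3; auto_derive; auto; ring. Qed.

Lemma derivable_pt_lim_lin3_y a1 a2 a3 x y z :
  derivable_pt_lim (fun u => lin3 a1 a2 a3 x u z) y a2.
Proof. apply is_derive_Reals; unfold lin3; auto_derive; auto; ring. Qed.

Lemma derivable_pt_lim_lin3_z a1 a2 a3 x y z :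
  derivable_pt_lim (fun u => lin3 a1 a2 a3 x y u) z a3.
Proof. apply is_derive_Reals; unfold lin3; auto_derive; auto; ring. Qed.

Lemma derivable_pt_lim_mult_comp (f g U V : R -> R) df dg p q x :
  derivable_pt_lim f (U x) df -> derivable_pt_lim g (V x) dg ->
  derivable_pt_lim U x p -> derivable_pt_lim V x q ->
  derivable_pt_lim (fun s => f (U s) * g (V s)) x (p * df * g (V x) + q * f (U x) * dg).
Proof.
  intros Hf Hg HU HV.
  replace (p * df * g (V x) + q * f (U x) * dg) with (df * p * g (V x) + f (U x) * (dg * q))
    by ring.
  apply (derivable_pt_lim_mult (fun s => f (U s)) (fun s => g (V s)));
    apply derivable_pt_lim_comp; assumption.
Qed.

(* Polar form of the symbol x1^2 + x2^2 + x3^2 - x1 x3 - x2 x3 of the operator. *)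
Definition pde_form (a1 a2 a3 b1 b2 b3 : R) : R :=
  a1 * b1 + a2 * b2 + a3 * b3 - (a1 * b3 + a3 * b1) / 2 - (a2 * b3 + a3 * b2) / 2.

Section ProductSolution.

Variables (D : R) (phi phi1 phi2 phit : R -> R -> R).
Hypothesis phi_du : forall u t, 0 < t -> derivable_pt_lim (fun w => phi w t) u (phi1 u t).
Hypothesis phi1_du : forall u t, 0 < t -> derivable_pt_lim (fun w => phi1 w t) u (phi2 u t).
Hypothesis phi_dt : forall u t, 0 < t -> derivable_pt_lim (fun s => phi u s) t (phit u t).
Hypothesis phi_heat : forall u t, 0 < t -> phit u t = 2 * D * phi2 u t.

Definition prod_d1 (p q u v t : R) : R := p * phi1 u t * phi v t + q * phi u t * phi1 v t.

Definition prod_d2 (p q r s u v t : R) : R :=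
  p * r * phi2 u t * phi v t + (p * s + q * r) * phi1 u t * phi1 v t
  + q * s * phi u t * phi2 v t.

Lemma derivable_pt_lim_prod (U V : R -> R) p q x t : 0 < t ->
  derivable_pt_lim U x p -> derivable_pt_lim V x q ->
  derivable_pt_lim (fun s => phi (U s) t * phi (V s) t) x (prod_d1 p q (U x) (V x) t).
Proof.
  intros; apply (derivable_pt_lim_mult_comp (fun w => phi w t) (fun w => phi w t)); auto.
Qed.

Lemma derivable_pt_lim_prod_d1 (U V : R -> R) p q r s x t : 0 < t ->
  derivable_pt_lim U x r -> derivable_pt_lim V x s ->
  derivable_pt_lim (fun w => prod_d1 p q (U w) (V w) t) x (prod_d2 p q r s (U x) (V x) t).
Proof.
  intros Ht HU HV; unfold prod_d1, prod_d2.
  replace (p * r * phi2 (U x) t * phi (V x) t + (p * s + q * r) * phi1 (U x) t * phi1 (V x) t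
           + q * s * phi (U x) t * phi2 (V x) t)
    with (p * (r * phi2 (U x) t * phi (V x) t + s * phi1 (U x) t * phi1 (V x) t)
          + q * (r * phi1 (U x) t * phi1 (V x) t + s * phi (U x) t * phi2 (V x) t)) by ring.
  apply (derivable_pt_lim_ext
           (fun w => p * (phi1 (U w) t * phi (V w) t) + q * (phi (U w) t * phi1 (V w) t)));
    [intros; ring|].
  apply (derivable_pt_lim_lincomb (fun w => phi1 (U w) t * phi (V w) t)
                                  (fun w => phi (U w) t * phi1 (V w) t)).
  - apply (derivable_pt_lim_mult_comp (fun w => phi1 w t) (fun w => phi w t)); auto.
  - apply (derivable_pt_lim_mult_comp (fun w => phi w t) (fun w => phi1 w t)); auto.
Qed.

Variables a1 a2 a3 b1 b2 b3 : R.
Hypothesis form_aa : pde_form a1 a2 a3 a1 a2 a3 = 1.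
Hypothesis form_bb : pde_form b1 b2 b3 b1 b2 b3 = 1.
Hypothesis form_ab : pde_form a1 a2 a3 b1 b2 b3 = 0.

Theorem pde_solution_prod :
  pde_solution D (fun x y z t => phi (lin3 a1 a2 a3 x y z) t * phi (lin3 b1 b2 b3 x y z) t).
Proof.
  set (A := lin3 a1 a2 a3); set (B := lin3 b1 b2 b3).
  exists (fun x y z t => prod_d1 a1 b1 (A x y z) (B x y z) t),
    (fun x y z t => prod_d1 a2 b2 (A x y z) (B x y z) t),
    (fun x y z t => prod_d1 a3 b3 (A x y z) (B x y z) t),
    (fun x y z t => phit (A x y z) t * phi (B x y z) t + phi (A x y z) t * phit (B x y z) t),
    (fun x y z t => prod_d2 a1 b1 a1 b1 (A x y z) (B x y z) t),
    (fun x y z t => prod_d2 a2 b2 a2 b2 (A x y z) (B x y z) t),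
    (fun x y z t => prod_d2 a3 b3 a3 b3 (A x y z) (B x y z) t),
    (fun x y z t => prod_d2 a1 b1 a3 b3 (A x y z) (B x y z) t),
    (fun x y z t => prod_d2 a2 b2 a3 b3 (A x y z) (B x y z) t).
  intros x y z t Ht.
  repeat split;
    [ apply (derivable_pt_lim_prod (fun u => A u y z) (fun u => B u y z))
    | apply (derivable_pt_lim_prod (fun u => A x u z) (fun u => B x u z))
    | apply (derivable_pt_lim_prod (fun u => A x y u) (fun u => B x y u))
    | apply (derivable_pt_lim_mult (fun s => phi (A x y z) s) (fun s => phi (B x y z) s))
    | apply (derivable_pt_lim_prod_d1 (fun u => A u y z) (fun u => B u y z))
    | apply (derivable_pt_lim_prod_d1 (fun u => A x u z) (fun u => B x u z))
    | apply (derivable_pt_lim_prod_d1 (fun u => A x y u) (fun u => B x y u))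
    | apply (derivable_pt_lim_prod_d1 (fun u => A x y u) (fun u => B x y u))
    | apply (derivable_pt_lim_prod_d1 (fun u => A x y u) (fun u => B x y u))
    | ]; auto; try
    first [ apply derivable_pt_lim_lin3_x | apply derivable_pt_lim_lin3_y
          | apply derivable_pt_lim_lin3_z ].
  rewrite !phi_heat by exact Ht; unfold prod_d2.
    transitivity (2 * D * (pde_form a1 a2 a3 a1 a2 a3 * phi2 (A x y z) t * phi (B x y z) t
                    + 2 * pde_form a1 a2 a3 b1 b2 b3 * phi1 (A x y z) t * phi1 (B x y z) t
                    + pde_form b1 b2 b3 b1 b2 b3 * phi (A x y z) t * phi2 (B x y z) t)).
  - rewrite form_aa, form_bb, form_ab; ring.
  - unfold pde_form; field.
Qed.

End ProductSolution.

Lemma ell0_pos D t : 0 < D -> 0 < t -> 0 < ell0 D t.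
Proof. intros; unfold ell0; apply sqrt_lt_R0; nra. Qed.

Lemma derivable_pt_lim_div_ell0 D w t : 0 < D -> 0 < t ->
  derivable_pt_lim (fun s => w / ell0 D s) t (-4 * D * w / ell0 D t ^ 3).
Proof.
  intros HD Ht; pose proof (ell0_pos D t HD Ht) as Hl.
  apply is_derive_Reals; unfold ell0 in *; auto_derive.
  - repeat split; [nra | lra].
  - field; lra.
Qed.

Lemma derivable_pt_lim_comp_div (f : R -> R) df l u : l <> 0 ->
  derivable_pt_lim f (u / l) df -> derivable_pt_lim (fun w => f (w / l)) u (df / l).
Proof.
  intros Hl Hf; replace (df / l) with (df * / l) by reflexivity.
  apply (derivable_pt_lim_comp (fun w => w / l)); auto.
  apply is_derive_Reals; auto_derive; [easy | field; exact Hl].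
Qed.

Lemma pde_solution_erfc_prod D a1 a2 a3 b1 b2 b3 : 0 < D ->
  pde_form a1 a2 a3 a1 a2 a3 = 1 -> pde_form b1 b2 b3 b1 b2 b3 = 1 ->
  pde_form a1 a2 a3 b1 b2 b3 = 0 ->
  pde_solution D (fun x y z t =>
    erfc (lin3 a1 a2 a3 x y z / ell0 D t) * erfc (lin3 b1 b2 b3 x y z / ell0 D t)).
Proof.
  intros HD.
  apply (pde_solution_prod D (fun u t => erfc (u / ell0 D t))
           (fun u t => derfc (u / ell0 D t) / ell0 D t)
           (fun u t => -2 * (u / ell0 D t) * derfc (u / ell0 D t) / ell0 D t / ell0 D t)
           (fun u t => derfc (u / ell0 D t) * (-4 * D * u / ell0 D t ^ 3)));
    intros u t Ht; pose proof (ell0_pos D t HD Ht) as Hl.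
  - apply derivable_pt_lim_comp_div; [lra | apply derivable_pt_lim_erfc].
  - apply (derivable_pt_lim_div_scal (fun w => derfc (w / ell0 D t))).
    apply derivable_pt_lim_comp_div; [lra | apply derivable_pt_lim_derfc].
  - apply (derivable_pt_lim_comp (fun s => u / ell0 D s) erfc).
    + apply derivable_pt_lim_div_ell0; assumption.
    + apply derivable_pt_lim_erfc.
  - field; lra.
Qed.

Lemma E0_pde_solution D : 0 < D -> pde_solution D (E0 D).
Proof.
  intros HD.
  apply pde_solution_ext with (fun x y z t =>
    1 * (1 * (erfc (lin3 1 0 0 x y z / ell0 D t) * erfc (lin3 0 1 0 x y z / ell0 D t))
         + 1 * (erfc (lin3 0 0 1 x y z / ell0 D t) * erfc (lin3 1 1 1 x y z / ell0 D t)))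
    + -1 * (erfc (lin3 1 0 1 x y z / ell0 D t) * erfc (lin3 0 1 1 x y z / ell0 D t))).
  - intros; unfold E0, lin3; cbv zeta.
    repeat rewrite ?Rmult_0_l, ?Rmult_1_l, ?Rplus_0_l, ?Rplus_0_r; ring.
  - repeat apply pde_solution_lincomb;
      apply pde_solution_erfc_prod; auto; unfold pde_form; lra.
Qed.

Lemma E0_sym D x y z t : E0 D x y z t = E0 D y x z t.
Proof. unfold E0; replace (y + x + z) with (x + y + z) by ring; ring. Qed.

Lemma E0_y0 D x z t : E0 D x 0 z t = erfc (x / ell0 D t).
Proof.
  unfold E0; rewrite Rdiv_0_l, erfc_0, Rplus_0_r, Rplus_0_l; ring.
Qed.

Lemma E0_x0 D y z t : E0 D 0 y z t = erfc (y / ell0 D t).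
Proof. rewrite E0_sym; apply E0_y0. Qed.

Lemma E0_z0 D x y t : E0 D x y 0 t = erfc ((x + y) / ell0 D t).
Proof.
  unfold E0; rewrite Rdiv_0_l, erfc_0, !Rplus_0_r; ring.
Qed.

Lemma erfc_unit_interval u : 0 <= u -> 0 <= erfc u <= 1.
Proof. intros Hu; split; [apply (erfc_bounds u Hu) | apply erfc_le_1, Hu]. Qed.

Lemma erfc_div_small eps : 0 < eps ->
  exists M, 0 <= M /\ forall a l, 0 < l -> M * l < a -> 0 <= erfc (a / l) < eps.
Proof.
  intros Heps; destruct (erfc_tail eps Heps) as [M [HM Htail]].
  exists M; split; [exact HM|]; intros a l Hl Ha.
  assert (Hal : M < a / l) by (apply Rmult_lt_reg_r with l; [lra | field_simplify; lra]).
  split; [apply erfc_unit_interval; lra | apply Htail, Hal].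
Qed.

Lemma Rabs_sub_prod_lt p1 q1 p2 q2 eps :
  0 <= p1 < eps -> 0 <= q1 <= 1 -> 0 <= p2 < eps -> 0 <= q2 <= 1 ->
  Rabs (p1 * q1 - p2 * q2) < eps.
Proof. intros; apply Rabs_def1; nra. Qed.

Lemma ell0_small D c : 0 < D -> 0 < c ->
  exists alpha, 0 < alpha /\ forall t, 0 <= t < alpha -> ell0 D t < c.
Proof.
  intros HD Hc; exists (c ^ 2 / (8 * D)); split; [apply Rdiv_lt_0_compat; nra|].
  intros t [Ht Hta]; unfold ell0; rewrite <- (sqrt_pow2 c) by lra.
  apply sqrt_lt_1_alt; split; [nra|].
  apply Rmult_lt_compat_l with (r := 8 * D) in Hta; [|lra].
  replace (8 * D * (c ^ 2 / (8 * D))) with (c ^ 2) in Hta by (field; lra); lra.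
Qed.

Lemma E0_initial D x y z : 0 < D -> 0 < x -> 0 < y -> 0 < z ->
  limit1_in (fun t => E0 D x y z t) (fun t => 0 < t) 0 0.
Proof.
  intros HD Hx Hy Hz eps Heps.
  destruct (erfc_div_small (eps / 2)) as [M [HM Hsmall]]; [lra|].
  set (m := Rmin x z).
  assert (Hm : 0 < m) by (apply Rmin_pos; assumption).
  destruct (ell0_small D (m / (M + 1)) HD) as [alpha [Halpha Hell]];
    [apply Rdiv_lt_0_compat; lra|].
  exists alpha; split; [exact Halpha|].
  intros t [Ht Hdist]; simpl in *; unfold R_dist in *.
  rewrite Rminus_0_r, Rabs_right in Hdist by lra.
  pose proof (ell0_pos D t HD Ht) as Hl.
  assert (HMl : M * ell0 D t < m).
  { pose proof (Hell t (conj (Rlt_le _ _ Ht) Hdist)) as Hlt.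
    apply Rmult_lt_compat_r with (r := M + 1) in Hlt; [|lra].
    replace (m / (M + 1) * (M + 1)) with m in Hlt by (field; lra); nra. }
  assert (Hmx : m <= x) by apply Rmin_l.
  assert (Hmz : m <= z) by apply Rmin_r.
  set (l := ell0 D t) in *.
  assert (Hunit : forall w, 0 <= w -> 0 <= erfc (w / l) <= 1)
    by (intros; apply erfc_unit_interval, Rdiv_le_0_compat; lra).
  assert (Hfirst : 0 <= erfc (x / l) * erfc (y / l) < eps / 2).
  { destruct (Hsmall x l) as [H1 H2]; [lra | lra|].
    destruct (Hunit y) as [H3 H4]; [lra|]; split; nra. }
  assert (Hrest : Rabs (erfc (z / l) * erfc ((x + y + z) / l)
                        - erfc ((x + z) / l) * erfc ((y + z) / l)) < eps / 2).
  { apply Rabs_sub_prod_lt; first [apply Hsmall | apply Hunit]; lra. }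
  unfold E0; fold l; rewrite Rminus_0_r.
  apply Rabs_def2 in Hrest; apply Rabs_def1; lra.
Qed.

Lemma E0_decouple D x y t : 0 < D -> 0 < t ->
  forall eps, 0 < eps -> exists M, forall z, M < z ->
    Rabs (E0 D x y z t - erfc (x / ell0 D t) * erfc (y / ell0 D t)) < eps.
Proof.
  intros HD Ht eps Heps.
  destruct (erfc_div_small eps Heps) as [M [HM Hsmall]].
  pose proof (ell0_pos D t HD Ht) as Hl; set (l := ell0 D t) in *.
  exists (M * l + Rabs x + Rabs y); intros z Hz.
  pose proof (Rle_abs (- x)); pose proof (Rle_abs (- y)); rewrite !Rabs_Ropp in *.
  pose proof (Rabs_pos x); pose proof (Rabs_pos y).
  assert (0 <= M * l) by nra.
  assert (Hunit : forall w, 0 <= w -> 0 <= erfc (w / l) <= 1)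
    by (intros; apply erfc_unit_interval, Rdiv_le_0_compat; lra).
  replace (E0 D x y z t - erfc (x / l) * erfc (y / l))
    with (erfc (z / l) * erfc ((x + y + z) / l) - erfc ((x + z) / l) * erfc ((y + z) / l))
    by (unfold E0; fold l; ring).
  apply Rabs_sub_prod_lt; first [apply Hsmall | apply Hunit]; lra.
Qed.

Theorem mainTheorem7 (D : R) (hD : 0 < D) :
  (exists Ex Ey Ez Et Exx Eyy Ezz Exz Eyz : R -> R -> R -> R -> R,
     forall x y z t, 0 < t ->
       derivable_pt_lim (fun u => E0 D u y z t) x (Ex x y z t) /\
       derivable_pt_lim (fun u => E0 D x u z t) y (Ey x y z t) /\
       derivable_pt_lim (fun u => E0 D x y u t) z (Ez x y z t) /\
       derivable_pt_lim (fun u => E0 D x y z u) t (Et x y z t) /\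
       derivable_pt_lim (fun u => Ex u y z t) x (Exx x y z t) /\
       derivable_pt_lim (fun u => Ey x u z t) y (Eyy x y z t) /\
       derivable_pt_lim (fun u => Ez x y u t) z (Ezz x y z t) /\
       derivable_pt_lim (fun u => Ex x y u t) z (Exz x y z t) /\
       derivable_pt_lim (fun u => Ey x y u t) z (Eyz x y z t) /\
       Et x y z t = 2 * D * (Exx x y z t + Eyy x y z t + Ezz x y z t
                             - Exz x y z t - Eyz x y z t)) /\
  (forall x y z t, 0 < t -> E0 D x y z t = E0 D y x z t) /\
  (forall x z t, 0 < t -> E0 D x 0 z t = erfc (x / ell0 D t)) /\
  (forall y z t, 0 < t -> E0 D 0 y z t = erfc (y / ell0 D t)) /\
  (forall x y t, 0 < t -> E0 D x y 0 t = erfc ((x + y) / ell0 D t)) /\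
  (forall x y z, 0 < x -> 0 < y -> 0 < z ->
     limit1_in (fun t => E0 D x y z t) (fun t => 0 < t) 0 0) /\
  (forall x y t, 0 < t ->
     forall eps, 0 < eps -> exists M, forall z, M < z ->
       Rabs (E0 D x y z t - erfc (x / ell0 D t) * erfc (y / ell0 D t)) < eps).
Proof.
  split; [exact (E0_pde_solution D hD)|].
  split; [intros; apply E0_sym|].
  split; [intros; apply E0_y0|].
  split; [intros; apply E0_x0|].
  split; [intros; apply E0_z0|].
  split; [intros; apply E0_initial; assumption|].
  intros; apply E0_decouple; assumption.
Qed.
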